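(* Let $\alpha<_c\beta$ with $\beta/\!\!/\alpha$ an nc border strip with $n$ boxes, let $j\in NE(\beta/\!\!/\alpha)$, and let $w\in CRHW_n$ with $w(\alpha)=\beta$. Define $w'$ to be the unique reverse hookword with the same content as $w$ and with $\mathrm{leg}(w')=\mathrm{leg}(w)\setminus\{j\}$ if $j\in\mathrm{leg}(w)$, and $\mathrm{leg}(w')=\mathrm{leg}(w)\cup\{j\}$ if $j\notin\mathrm{leg}(w)$. Then $w'\in CRHW_n$ and $w'(\alpha)=\beta$.
   Context: A composition is a finite sequence $\alpha=(\alpha_1,\dots,\alpha_k)$ of positive integers; $\ell(\alpha)=k$; its diagram is the set of boxes $(i,j)$, $1\le i\le\ell(\alpha)$, $1\le j\le\alpha_i$, rows top to bottom, columns left to right. For compositions $\gamma=(\gamma_1,\dots,\gamma_l)$, $\delta$ write $\gamma\lessdot_c\delta$ if $\delta=(1,\gamma_1,\dots,\gamma_l)$ or $\delta=(\gamma_1,\dots,\gamma_k+1,\dots,\gamma_l)$ with $\gamma_i\ne\gamma_k$ for all $i<k$; $<_c$ is the transitive closure. For $\gamma<_c\delta$, $\delta/\!\!/\gamma$ consists of the boxes of $\delta$ other than $(\ell(\delta)-\ell(\gamma)+i,j)$, $1\le i\le\ell(\gamma)$, $1\le j\le\gamma_i$. $\mathrm{supp}(\beta/\!\!/\alpha)$ is the set of columns containing a box of $\beta/\!\!/\alpha$; interval shape: supp is a set of consecutive integers. nc border strip: an interval shape such that (1) if $(i,1),(i,2)\in\beta/\!\!/\alpha$ then $(i,1)$ is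 the bottommost box of column 1 of $\beta/\!\!/\alpha$, and (2) if $(i,j),(i,j+1)\in\beta/\!\!/\alpha$ with $j\ge2$ then $(i,j)$ is the topmost box of column $j$ of $\beta/\!\!/\alpha$. $NE(\beta/\!\!/\alpha)$ is the set of $j\in\mathrm{supp}(\beta/\!\!/\alpha)$ such that column $j+1$ of $\beta/\!\!/\alpha$ contains at least one box and $i_1<i_2$ for all boxes $(i_1,j+1),(i_2,j)\in\beta/\!\!/\alpha$. Box-adding operators: $\mathfrak t_1(\alpha)=(1,\alpha_1,\dots,\alpha_k)$; for $i\ge2$, $\mathfrak t_i(\alpha)$ increases the leftmost part equal to $i-1$ by $1$, and is $0$ if none; $\mathfrak t_i(0)=0$. A word $w=\mathfrak t_{i_1}\cdots\mathfrak t_{i_n}$ acts by $w(\alpha)=\mathfrak t_{i_1}(\cdots\mathfrak t_{i_n}(\alpha))$; it is a reverse $k$-hookword if $i_1\le\cdots\le i_{k+1}>i_{k+2}>\cdots>i_n$, with $\mathrm{leg}(w)=\{i_{k+1},\dots,i_n\}$ (a set of distinct integers containing the maximum index). Its content is the vector whose $i$-th entry is the number of occurrences of $\mathfrak t_i$ in $w$; a reverse hookword is determined by its content together with its leg. $w$ is connected if $\{i_1,\dots,i_n\}$ is a set of consecutive integers; $CRHW_n$ is the set of connected reverse hookwords of length $n$. *)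

From mathcomp Require Import all_boot.
Set Implicit Arguments. Unset Strict Implicit. Unset Printing Implicit Defensive.

Definition composition (a : seq nat) : bool := all (fun x => 0 < x) a.

Definition coverc (g d : seq nat) : bool :=
  (d == 1 :: g) ||
  has (fun k => (d == set_nth 0 g k (nth 0 g k).+1) &&
                all (fun i => nth 0 g i != nth 0 g k) (iota 0 k))
      (iota 0 (size g)).

Definition ltc (g d : seq nat) : Prop :=
  exists s : seq (seq nat), [/\ s != [::], path coverc g s & last g s = d].

(* Boxes are (row, column), both 1-based, rows top to bottom. *)
Definition in_skew (a b : seq nat) (x : nat * nat) : bool :=
  let: (r, c) := x in
  let d := size b - size a in
  [&& 0 < r <= size b, 0 < c <= nth 0 b r.-1
    & ~~ ((d < r) && (c <= nth 0 a (r - d).-1))].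

Definition skew (a b : seq nat) : seq (nat * nat) :=
  [seq x <- [seq (r, c) | r <- iota 1 (size b), c <- iota 1 (nth 0 b r.-1)]
     | in_skew a b x].

Definition in_supp (a b : seq nat) (j : nat) : bool :=
  has (fun x => x.2 == j) (skew a b).

Definition interval_shape (a b : seq nat) : Prop :=
  forall p q r, in_supp a b p -> in_supp a b q -> p <= r <= q -> in_supp a b r.

Definition nc_border_strip (a b : seq nat) : Prop :=
  [/\ interval_shape a b,
      (forall i, in_skew a b (i, 1) -> in_skew a b (i, 2) ->
         forall i', in_skew a b (i', 1) -> i' <= i)
    & (forall i j, 2 <= j -> in_skew a b (i, j) -> in_skew a b (i, j.+1) ->
         forall i', in_skew a b (i', j) -> i <= i')].

Definition in_NE (a b : seq nat) (j : nat) : Prop :=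
  [/\ in_supp a b j, in_supp a b j.+1 &
      forall i1 i2, in_skew a b (i1, j.+1) -> in_skew a b (i2, j) -> i1 < i2].

(* Box-adding operators; None plays the role of 0.  t_0 is not defined in the
   paper; we set it to 0 (None). *)
Definition top (i : nat) (a : seq nat) : option (seq nat) :=
  match i with
  | 0 => None
  | 1 => Some (1 :: a)
  | v.+1 => if v \in a then Some (set_nth 0 a (index v a) v.+1) else None
  end.

(* w = t_{i_1} ... t_{i_n} represented as [:: i_1; ...; i_n];
   w(a) = t_{i_1}( ... t_{i_n}(a)) *)
Definition act (w : seq nat) (a : seq nat) : option (seq nat) :=
  foldr (fun i acc => obind (top i) acc) (Some a) w.

(* reverse k-hookword: i_1 <= ... <= i_{k+1} > i_{k+2} > ... > i_n
   (0-based: the entries of index 0..k weakly increase, those of index k..n-1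
   strictly decrease); its leg is {i_{k+1},...,i_n} = drop k w. *)
Definition rev_khookword (k : nat) (w : seq nat) : bool :=
  [&& k < size w, sorted leq (take k.+1 w) & sorted (fun x y => y < x) (drop k w)].

Definition leg (k : nat) (w : seq nat) : seq nat := drop k w.

Definition content_eq (w w' : seq nat) : Prop :=
  forall i, count_mem i w' = count_mem i w.

Definition connected (w : seq nat) : Prop :=
  forall a b c, a \in w -> b \in w -> a <= c <= b -> c \in w.

(* w \in CRHW_n (the reverse k-hookword index k is given explicitly) *)
Definition CRHW (n k : nat) (w : seq nat) : Prop :=
  [/\ rev_khookword k w, connected w & size w = n].

From mathcomp Require Import all_boot zify.
Set Implicit Arguments. Unset Strict Implicit. Unset Printing Implicit Defensive.

(* Write w = arm ++ h :: leg with h its maximum. The columns j and j+1 of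
   beta // alpha are occupied, so j and j+1 occur in w and j < h; hence w is
   either A1 ++ U ++ j :: L2 (j in the leg) or A1 ++ j :: U ++ L2 (j not in the
   leg), with A1 <= j < U and L2 < j, and the other arrangement is the reverse
   hookword w' with the same content and the toggled leg; a reverse hookword
   is determined by its content and its leg.  Moving t_j across the letters of
   U, all larger than j, does not change the result: t_x and t_j commute for
   x > j+1, and t_j, t_{j+1} commute exactly when the box added in column j+1
   lies strictly above the one added in column j, which j in NE(beta // alpha)
   guarantees. *)

(* [bottom_sub a Z]: the rows of [a] fit into the bottom [size a] rows of [Z],
   which is how [in_skew a Z] places [a] inside [Z]. *)
Definition bottom_sub (a Z : seq nat) : Prop :=
  size a <= size Z /\ forall i, nth 0 a i <= nth 0 Z (i + (size Z - size a)).

Lemma bottom_sub_refl a : bottom_sub a a.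
Proof. by split=> // i; rewrite subnn addn0. Qed.

Lemma top_Some x Z Z' : top x Z = Some Z' ->
  (x = 1 /\ Z' = 1 :: Z) \/
  (exists v, [/\ x = v.+2, v.+1 \in Z & Z' = set_nth 0 Z (index v.+1 Z) v.+2]).
Proof.
case: x => [|[|v]] //=; first by move=> [<-]; left.
by case: ifP => // vZ [<-]; right; exists v.
Qed.

Lemma size_set_nth_index v Z y : v \in Z -> size (set_nth 0 Z (index v Z) y) = size Z.
Proof. by move=> vZ; rewrite size_set_nth; apply/maxn_idPr; rewrite index_mem. Qed.

Lemma bottom_sub_top a x Z Z' : bottom_sub a Z -> top x Z = Some Z' -> bottom_sub a Z'.
Proof.
move=> [aZ le_a] /top_Some[[_ ->]|[v [_ vZ ->]]].
  by split=> [|i]; rewrite /= ?leqW // (subSn aZ) addnS.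
rewrite /bottom_sub size_set_nth_index //; split=> // i; apply: leq_trans (le_a i) _.
by rewrite nth_set_nth /=; case: eqP => // ->; rewrite nth_index.
Qed.

Lemma bottom_sub_act a u Z Z' : bottom_sub a Z -> act u Z = Some Z' -> bottom_sub a Z'.
Proof.
elim: u Z' => [|x u IH] Z' aZ /=; first by case=> <-.
by case E: (act u Z) => [Y|] //=; apply: bottom_sub_top; exact: IH.
Qed.

Lemma act_cat u1 u2 Z : act (u1 ++ u2) Z = obind (act u1) (act u2 Z).
Proof. by elim: u1 => [|x u1 IH] /=; [case: (act u2 Z) | rewrite IH; case: (act u2 Z)]. Qed.

Definition top_row (x : nat) (Z : seq nat) : nat :=
  if x == 1 then 1 else (index x.-1 Z).+1.

Section BoxesOfTop.

Variables (a Z Z' : seq nat) (x : nat).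
Hypotheses (aZ : bottom_sub a Z) (ZZ' : top x Z = Some Z').

(* [t_1] adds a new top row, so it shifts every old box one row down. *)
Lemma in_skew_top r c : in_skew a Z (r, c) -> in_skew a Z' (r + (x == 1), c).
Proof.
case: aZ => [sa le_a]; case/top_Some: ZZ' => [[-> ->]|[v [-> vZ ->]]].
  rewrite /in_skew /= addn1; case: r => [|r] //=.
  by rewrite (subSn sa) !ltnS subSS.
rewrite /in_skew /= addn0 size_set_nth_index //.
case/and3P=> -> /andP[-> cZ] -> /=; rewrite andbT; apply: leq_trans cZ _.
by rewrite nth_set_nth /=; case: eqP => // ->; rewrite nth_index.
Qed.

Lemma in_skew_top_new : in_skew a Z' (top_row x Z, x).
Proof.
case: aZ => [sa le_a]; case/top_Some: ZZ' => [[-> ->]|[v [-> vZ ->]]].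
  by rewrite /top_row /in_skew /= (subSn sa) ltnS ltn0.
rewrite /top_row /in_skew /= size_set_nth_index // ltnS index_mem vZ nth_set_nth /= eqxx ltnSn /=.
apply/negP=> /andP[lt_ia le_va]; have := le_a (index v.+1 Z - (size Z - size a)).
rewrite subnK // nth_index //; rewrite subSn // /= in le_va; lia.
Qed.

Lemma in_skew_top_inv r c : in_skew a Z' (r, c) -> c = x \/ exists r', in_skew a Z (r', c).
Proof.
case: aZ => [sa le_a]; case/top_Some: ZZ' => [[-> ->]|[v [-> vZ ->]]].
  rewrite /in_skew /=; case: r => [|[|r]] //=; rewrite (subSn sa) /=.
    by case/andP=> /andP[c0 c1] _; left; lia.
  by move=> H; right; exists r.+1; move: H; rewrite !ltnS subSS.
rewrite /in_skew /= size_set_nth_index // nth_set_nth /=.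
case: ifP => [/eqP r_eq|_] H; last by right; exists r.
case/and3P: H => r_lt /andP[c0 c_le] r_ext; case: (ltngtP c v.+2) => c_v; [|lia|by left].
by right; exists r; rewrite r_lt r_ext c0 /= andbT r_eq nth_index.
Qed.

End BoxesOfTop.

Lemma in_suppP a b c : in_supp a b c -> exists r, in_skew a b (r, c).
Proof.
case/hasP=> [[r c'] /= box /eqP Ec]; subst c'; exists r.
by move: box; rewrite mem_filter => /andP[].
Qed.

Lemma in_skew_col_gt0 a b r c : in_skew a b (r, c) -> 0 < c.
Proof. by case/and3P=> _ /andP[]. Qed.

Lemma col_mem_act a u Z r c : act u a = Some Z -> in_skew a Z (r, c) -> c \in u.
Proof.
elim: u Z r => [|x u IH] Z r /=.
  case=> <-; rewrite /in_skew subnn /= => /and3P[/andP[r0 _] /andP[_ cle]].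
  by rewrite r0 subn0 cle.
case E: (act u a) => [Y|] //= YZ rc.
case: (in_skew_top_inv (bottom_sub_act (bottom_sub_refl a) E) YZ rc) => [->|[r' H]].
  exact: mem_head.
by rewrite in_cons (IH _ _ E H) orbT.
Qed.

Definition col_above (a : seq nat) (j : nat) (Z : seq nat) : Prop :=
  forall i1 i2, in_skew a Z (i1, j.+1) -> in_skew a Z (i2, j) -> i1 < i2.

Lemma col_above_top a j x Z Z' :
  bottom_sub a Z -> top x Z = Some Z' -> col_above a j Z' -> col_above a j Z.
Proof.
move=> aZ ZZ' above i1 i2 box1 box2.
by have := above _ _ (in_skew_top aZ ZZ' box1) (in_skew_top aZ ZZ' box2); rewrite ltn_add2r.
Qed.

Lemma col_above_act a j u Z Z' :
  bottom_sub a Z -> act u Z = Some Z' -> col_above a j Z' -> col_above a j Z.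
Proof.
elim: u Z' => [|x u IH] Z' aZ /=; first by case=> <-.
case E: (act u Z) => [Y|] //= YZ' above; apply: (IH Y) => //.
exact: col_above_top (bottom_sub_act aZ E) YZ' above.
Qed.

Lemma index_set_nth_neq (s : seq nat) p v y : p < size s -> nth 0 s p != y -> v != y ->
  index y (set_nth 0 s p v) = index y s.
Proof.
elim: s p => [|x s IH] [|p] //= lt_p; first by move=> /negbTE -> /negbTE ->.
by move=> ne_y ne_v; rewrite IH.
Qed.

Lemma mem_set_nth_neq (s : seq nat) p v y : p < size s -> nth 0 s p != y -> v != y ->
  (y \in set_nth 0 s p v) = (y \in s).
Proof.
move=> lt_p ne_y ne_v; rewrite -!index_mem index_set_nth_neq // size_set_nth.
by rewrite (maxn_idPr lt_p).
Qed.

Lemma index_set_nth_eq (s : seq nat) p y : p < size s ->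
  index y (set_nth 0 s p y) = minn (index y s) p.
Proof.
elim: s p => [|x s IH] [|p] //= lt_p; first by rewrite eqxx minn0.
by case: eqP => _; [rewrite min0n | rewrite IH // minnSS].
Qed.

Lemma mem_set_nth_eq (s : seq nat) p y : p < size s -> y \in set_nth 0 s p y.
Proof.
move=> lt_p; apply/(nthP 0); exists p; last by rewrite nth_set_nth /= eqxx.
by rewrite size_set_nth (maxn_idPr lt_p).
Qed.

Lemma top_comm_far j x V : 0 < j -> j.+1 < x ->
  obind (top x) (top j V) = obind (top j) (top x V).
Proof.
case: j => [|[|u]] // _.
  by case: x => [|[|[|y]]] // _ /=; rewrite in_cons /=; case: ifP.
case: x => [|[|y]] // lt_uy /=.
case uV: (u.+1 \in V); case yV: (y.+1 \in V) => /=.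
- rewrite mem_set_nth_neq ?index_mem ?nth_index // ?yV; try (apply/eqP; lia).
  rewrite /= mem_set_nth_neq ?index_mem ?nth_index // ?uV; try (apply/eqP; lia).
  rewrite /= !index_set_nth_neq ?index_mem ?nth_index //; try (apply/eqP; lia).
  rewrite set_set_nth; case: eqP => // E.
  by have := nth_index 0 uV; rewrite E nth_index //; lia.
- by rewrite mem_set_nth_neq ?index_mem ?nth_index // ?yV; try (apply/eqP; lia).
- by rewrite mem_set_nth_neq ?index_mem ?nth_index // ?uV; try (apply/eqP; lia).
- by [].
Qed.

Lemma col_above_top2 a j x y Y Y' B :
  bottom_sub a Y -> top x Y = Some Y' -> top y Y' = Some B -> col_above a j B ->
  (x = j.+1 -> y = j -> top_row x Y + (y == 1) < top_row y Y') /\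
  (x = j -> y = j.+1 -> top_row y Y' < top_row x Y + (y == 1)).
Proof.
move=> aY YY' Y'B above; have aY' := bottom_sub_top aY YY'.
have old := in_skew_top aY' Y'B (in_skew_top_new aY YY').
have new := in_skew_top_new aY' Y'B.
by split=> Ex Ey; subst x y; apply: above.
Qed.

Lemma top_succ_comm u V : u.+1 \in V -> index u.+2 V < index u.+1 V ->
  obind (top u.+3) (top u.+2 V) = obind (top u.+2) (top u.+3 V).
Proof.
move=> uV lt_qp; set p := index u.+1 V in lt_qp *; set q := index u.+2 V in lt_qp *.
have lt_p : p < size V by rewrite index_mem.
have vV : u.+2 \in V by rewrite -index_mem (ltn_trans lt_qp).
have nth_q : nth 0 V q = u.+2 := nth_index 0 vV.
rewrite /= uV vV /= mem_set_nth_eq // index_set_nth_eq // (minn_idPl (ltnW lt_qp)).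
rewrite mem_set_nth_neq ?index_mem ?nth_q ?uV //=; try (apply/eqP; lia).
rewrite index_set_nth_neq ?index_mem ?nth_q //; try (apply/eqP; lia).
by rewrite set_set_nth -/p -/q (gtn_eqF lt_qp).
Qed.

(* In either order, [col_above] on the two new boxes forces
   [index u.+2 V < index u.+1 V] (and rules out [j = 1]), which is the
   hypothesis of [top_succ_comm]. *)
Lemma top_comm_succ a j V B : 0 < j -> bottom_sub a V -> col_above a j B ->
  obind (top j.+1) (top j V) = Some B <-> obind (top j) (top j.+1 V) = Some B.
Proof.
move=> j_gt0 aV above; split.
- case VV': (top j V) => [V'|] // V'B.
  have [_ /(_ erefl erefl)] := col_above_top2 aV VV' V'B above.
  case: j j_gt0 VV' V'B {above} => [|[|u]] // _ VV' V'B.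
  have [[//]|[_ [[<-] uV EV']]] := top_Some VV'.
  move=> lt_row; rewrite /top_row /= EV' index_set_nth_eq ?index_mem // in lt_row.
  rewrite addn0 ltnS gtn_min ltnn orbF in lt_row.
  by rewrite -top_succ_comm // VV'.
- case VV': (top j.+1 V) => [V'|] // V'B.
  have [/(_ erefl erefl)] := col_above_top2 aV VV' V'B above.
  case: j j_gt0 VV' V'B {above} => [|[|u]] // _ VV' V'B.
  have [[//]|[_ [[<-] vV EV']]] := top_Some VV'.
  have [[//]|[_ [[<-] uV _]]] := top_Some V'B.
  rewrite EV' mem_set_nth_neq ?index_mem ?nth_index // in uV; try (apply/eqP; lia).
  move=> lt_row; rewrite /top_row /= EV' addn0 ltnS in lt_row.
  rewrite index_set_nth_neq ?index_mem ?nth_index // in lt_row; try (apply/eqP; lia).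
  by rewrite top_succ_comm // VV'.
Qed.

Lemma top_commP a j x V B : 0 < j < x -> bottom_sub a V -> col_above a j B ->
  obind (top x) (top j V) = Some B <-> obind (top j) (top x V) = Some B.
Proof.
move=> /andP[j_gt0 lt_jx] aV above.
move: lt_jx; rewrite leq_eqVlt => /orP[/eqP Ex | lt_j1x]; last by rewrite top_comm_far.
by rewrite -Ex; exact: (top_comm_succ j_gt0 aV above).
Qed.

Lemma act_commP a j U : 0 < j -> all (fun x => j < x) U ->
  forall Y B, bottom_sub a Y -> col_above a j B ->
  obind (act U) (top j Y) = Some B <-> obind (top j) (act U Y) = Some B.
Proof.
move=> j_gt0; elim: U => [|x U IH] /=; first by move=> _ Y B; case: (top j Y).
case/andP=> lt_jx gtU Y B aY above; have jx : 0 < j < x by rewrite j_gt0.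
split.
- case YY1: (top j Y) => [Y1|] //=; case Y1W: (act U Y1) => [W|] //= WB.
  have aW := bottom_sub_act (bottom_sub_top aY YY1) Y1W.
  have := (IH gtU Y W aY (col_above_top aW WB above)).1; rewrite YY1 => /(_ Y1W).
  case YV: (act U Y) => [V|] //= VW.
  by apply/(top_commP jx (bottom_sub_act aY YV) above); rewrite /= VW.
- case YV: (act U Y) => [V|] //=; case VV2: (top x V) => [V2|] //= V2B.
  have aV := bottom_sub_act aY YV.
  have := (top_commP jx aV above).2; rewrite VV2 => /(_ V2B).
  case VW: (top j V) => [W|] //= WB.
  have := (IH gtU Y W aY (col_above_top (bottom_sub_top aV VW) WB above)).2.
  by rewrite YV => /(_ VW); case: (top j Y) => [Y1|] //= ->.
Qed.

Lemma act_move a j A U L B : 0 < j -> all (fun x => j < x) U -> col_above a j B ->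
  act (A ++ U ++ j :: L) a = Some B <-> act (A ++ j :: U ++ L) a = Some B.
Proof.
move=> j_gt0 gtU above; rewrite !act_cat /= act_cat.
case aY: (act L a) => [Y|] //=; have aY' := bottom_sub_act (bottom_sub_refl a) aY.
split.
- case YZ: (obind (act U) (top j Y)) => [Z|] //= ZB.
  have aZ : bottom_sub a Z.
    move: YZ; case YY1: (top j Y) => [Y1|] //=.
    exact: bottom_sub_act (bottom_sub_top aY' YY1).
  have := (act_commP j_gt0 gtU aY' (col_above_act aZ ZB above)).1 YZ.
  by case: (act U Y) => [V|] //= ->.
- case YV: (act U Y) => [V|] //=; case VZ: (top j V) => [Z|] //= ZB.
  have aZ := bottom_sub_top (bottom_sub_act aY' YV) VZ.
  have := (act_commP j_gt0 gtU aY' (col_above_act aZ ZB above)).2.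
  by rewrite YV => /(_ VZ) ->.
Qed.

Lemma gtn_trans : transitive gtn.
Proof. exact: rev_trans ltn_trans. Qed.

Lemma sorted_rconsE (T : Type) (r : rel T) : transitive r ->
  forall s t, sorted r (rcons s t) = all (r^~ t) s && sorted r s.
Proof.
move=> r_tr s t; elim: s => [|x s IH] //=.
rewrite !(path_sortedE r_tr) IH all_rcons /=.
by case: (r x t); case: (all (r x) s); case: (all (r^~ t) s).
Qed.

Lemma sorted_filter_predC_cat (T : eqType) (r : rel T) (p : pred T) s :
  transitive r -> (forall x y, r x y -> p y -> p x) ->
  sorted r s -> filter p s ++ filter (predC p) s = s.
Proof.
move=> r_tr p_down; elim: s => [|x s IH] //= Hs.
have {}IH := IH (path_sorted Hs).
case: ifP => px /=; first by rewrite IH.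
have npx : all (predC p) s.
  by apply: sub_all (order_path_min r_tr Hs) => y /p_down /contraFN; apply.
have /eqP -> : filter p s == [::] by rewrite -[_ == _]negbK -has_filter -all_predC.
by rewrite (all_filterP npx).
Qed.

Lemma sorted_leq_rcons_split j h arm : sorted leq (rcons arm h) -> j < h ->
  exists A1 A2,
    [/\ arm = A1 ++ A2, sorted leq (rcons A1 j) & sorted leq (j.+1 :: rcons A2 h)].
Proof.
move=> sarm jh; set p : pred nat := fun x => x <= j.
have hNp : p h = false by rewrite /p leqNgt jh.
have := sorted_filter_predC_cat (p := p) leq_trans (fun x y => @leq_trans y x j) sarm.
rewrite !filter_rcons /= hNp /= -rcons_cat => /(rcons_injl h) Earm.
exists (filter p arm), (filter (predC p) arm); split=> //.
  rewrite (sorted_rconsE leq_trans) filter_all /=; apply: (sorted_filter leq_trans).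
  by move: sarm; rewrite (sorted_rconsE leq_trans) => /andP[].
rewrite /= (path_sortedE leq_trans) all_rcons jh /=.
have -> : rcons (filter (predC p) arm) h = filter (predC p) (rcons arm h).
  by rewrite filter_rcons /= hNp.
rewrite (sorted_filter leq_trans) // andbT; apply/allP => x.
by rewrite mem_filter /p /= -ltnNge => /andP[].
Qed.

Lemma sorted_gtn_cons_split j h lg : sorted gtn (h :: lg) -> j < h -> j \notin lg ->
  exists L1 L2,
    [/\ lg = L1 ++ L2, sorted gtn (h :: rcons L1 j) & sorted gtn (j :: L2)].
Proof.
move=> slg jh jNlg; set p : pred nat := fun x => j < x.
have ph : p h by [].
have := sorted_filter_predC_cat (p := p) gtn_trans (fun x y xy jy => ltn_trans jy xy) slg.
rewrite /= ph /= => -[Elg].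
exists (filter p lg), (filter (predC p) lg); split=> //.
  change (sorted gtn (rcons (h :: filter p lg) j)); rewrite (sorted_rconsE gtn_trans).
  have -> : h :: filter p lg = filter p (h :: lg) by rewrite /= ph.
  by rewrite filter_all (sorted_filter gtn_trans).
rewrite /= (path_sortedE gtn_trans) (sorted_filter gtn_trans) ?(path_sorted slg) // andbT.
apply/allP => x; rewrite mem_filter /p /= -leqNgt leq_eqVlt => /andP[/orP[/eqP xj|//] xlg].
by move: jNlg; rewrite -xj xlg.
Qed.

Lemma sorted_leq_rcons_mem j A : sorted leq (rcons A j) -> j \in A ->
  exists A', A = rcons A' j.
Proof.
case/lastP: A => [|A' t] // sA; rewrite mem_rcons in_cons => jA; exists A'; congr rcons.
move: sA; rewrite !(sorted_rconsE leq_trans) all_rcons => /andP[/andP[tj _] /andP[A't _]].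
apply/eqP; rewrite eqn_leq tj /=.
by case/orP: jA => [/eqP -> // | /(allP A't)].
Qed.

Lemma perm_cat_cons (T : eqType) s1 (x : T) s2 : perm_eq (s1 ++ x :: s2) (x :: s1 ++ s2).
Proof. by rewrite (perm_catCA s1 [:: x] s2). Qed.

Definition toggle_leg (j : nat) (L : seq nat) : pred nat :=
  fun i => if j \in L then (i \in L) && (i != j) else (i \in L) || (i == j).

Lemma toggle_leg_cat_cons j s1 s2 : j \notin s1 ++ s2 ->
  toggle_leg j (s1 ++ j :: s2) =i s1 ++ s2.
Proof.
move=> jN i; rewrite [in LHS]unfold_in /toggle_leg !mem_cat !in_cons eqxx orbT /=.
by case: eqVneq => [->|_] /=; rewrite ?andbF ?andbT // -mem_cat (negbTE jN).
Qed.

Lemma toggle_leg_cat j s1 s2 : j \notin s1 ++ s2 ->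
  toggle_leg j (s1 ++ s2) =i s1 ++ j :: s2.
Proof.
move=> jN i; rewrite [in LHS]unfold_in /toggle_leg (negbTE jN) !mem_cat in_cons.
by case: (i == j) (i \in s1) (i \in s2) => [] [] [].
Qed.

Lemma rev_khookwordP k w : rev_khookword k w ->
  exists arm h lg, [/\ w = arm ++ h :: lg, size arm = k,
                       sorted leq (rcons arm h) & sorted gtn (h :: lg)].
Proof.
case/and3P=> kw sarm slg; exists (take k w), (nth 0 w k), (drop k.+1 w).
rewrite -(drop_nth 0 kw) cat_take_drop (size_takel (ltnW kw)).
by rewrite -(take_nth 0 kw).
Qed.

Lemma rev_khookword_cat arm h lg :
  sorted leq (rcons arm h) -> sorted gtn (h :: lg) ->
  rev_khookword (size arm) (arm ++ h :: lg).
Proof.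
move=> sarm slg; apply/and3P; split.
- by rewrite size_cat /= -addSnnS leq_addr.
- by rewrite take_cat ltnNge leqnSn /= subSnn /= take0 cats1.
- by rewrite drop_size_cat.
Qed.

Section HookwordToggle.

Variables (j h : nat) (A1 A2 L1 L2 : seq nat).
Hypotheses (sA1 : sorted leq (rcons A1 j)) (sA2 : sorted leq (j.+1 :: rcons A2 h))
  (sL1 : sorted gtn (h :: rcons L1 j)) (sL2 : sorted gtn (j :: L2)).

Lemma hook_middle_gt : all (fun x => j < x) (A2 ++ h :: L1).
Proof.
have := order_path_min leq_trans sA2; rewrite all_rcons all_cat => /andP[jh jA2].
rewrite jA2 /= jh /=; move: sL1.
by rewrite -[h :: _]/(rcons (h :: L1) j) (sorted_rconsE gtn_trans) => /andP[/andP[_ jL1] _].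
Qed.

Lemma sorted_leq_hook_arm : sorted leq (A1 ++ j :: rcons A2 h).
Proof. by rewrite sorted_cat_cons sA1 (path_le leq_trans (leqnSn j) sA2). Qed.

Lemma sorted_gtn_hook_leg : sorted gtn (h :: L1 ++ j :: L2).
Proof. by rewrite -cat_cons sorted_cat_cons sL1. Qed.

Lemma notin_hook_leg : j \notin h :: L1 ++ L2.
Proof.
have := sorted_uniq gtn_trans (fun x => ltnn x) sorted_gtn_hook_leg.
by rewrite -cat_cons (perm_uniq (perm_cat_cons _ _ _)) => /andP[].
Qed.

Local Notation U := (A2 ++ h :: L1).

Lemma rev_khookword_hook_arm : rev_khookword (size (A1 ++ j :: A2)) (A1 ++ j :: U ++ L2).
Proof.
have -> : A1 ++ j :: U ++ L2 = (A1 ++ j :: A2) ++ h :: L1 ++ L2 by rewrite -!catA.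
apply: rev_khookword_cat; first by rewrite rcons_cat /= sorted_leq_hook_arm.
apply: (subseq_sorted gtn_trans _ sorted_gtn_hook_leg).
by rewrite -!cat_cons cat_subseq // subseq_cons.
Qed.

Lemma rev_khookword_hook_leg : rev_khookword (size (A1 ++ A2)) (A1 ++ U ++ j :: L2).
Proof.
have -> : A1 ++ U ++ j :: L2 = (A1 ++ A2) ++ h :: L1 ++ j :: L2 by rewrite -!catA.
apply: rev_khookword_cat; last exact: sorted_gtn_hook_leg.
rewrite rcons_cat; apply: (subseq_sorted leq_trans _ sorted_leq_hook_arm).
by rewrite cat_subseq // subseq_cons.
Qed.

Lemma leg_hook_arm :
  leg (size (A1 ++ j :: A2)) (A1 ++ j :: U ++ L2) =i toggle_leg j (h :: L1 ++ j :: L2).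
Proof.
have -> : A1 ++ j :: U ++ L2 = (A1 ++ j :: A2) ++ h :: L1 ++ L2 by rewrite -!catA.
rewrite /leg drop_size_cat // -[h :: L1 ++ j :: L2]/((h :: L1) ++ j :: L2) => i.
by rewrite toggle_leg_cat_cons ?notin_hook_leg.
Qed.

Lemma leg_hook_leg :
  leg (size (A1 ++ A2)) (A1 ++ U ++ j :: L2) =i toggle_leg j (h :: L1 ++ L2).
Proof.
have -> : A1 ++ U ++ j :: L2 = (A1 ++ A2) ++ h :: L1 ++ j :: L2 by rewrite -!catA.
rewrite /leg drop_size_cat // -[h :: L1 ++ L2]/((h :: L1) ++ L2) => i.
by rewrite toggle_leg_cat ?notin_hook_leg.
Qed.

End HookwordToggle.

Lemma rev_khookword_toggle k w j : rev_khookword k w -> j \in w -> j.+1 \in w ->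
  exists A1 U L2 k' w',
    [/\ all (fun x => j < x) U, rev_khookword k' w',
        leg k' w' =i toggle_leg j (leg k w)
      & (w, w') = (A1 ++ U ++ j :: L2, A1 ++ j :: U ++ L2)
        \/ (w, w') = (A1 ++ j :: U ++ L2, A1 ++ U ++ j :: L2)].
Proof.
move=> /rev_khookwordP[arm [h [lg [-> <- sarm slg]]]] jw j1w.
rewrite /leg drop_size_cat //.
have jh : j < h.
  move: sarm slg; rewrite (sorted_rconsE leq_trans) /= (path_sortedE gtn_trans).
  move=> /andP[armh _] /andP[lgh _]; move: j1w; rewrite mem_cat in_cons.
  by case/or3P=> [/(allP armh) | /eqP -> | /(allP lgh) /ltnW].
have [A1 [A2 [Earm sA1 sA2]]] := sorted_leq_rcons_split sarm jh; subst arm.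
have [jlg | jNlg] := boolP (j \in lg).
  case/splitPr: jlg slg => L1 L2; rewrite -cat_cons sorted_cat_cons => /andP[sL1 sL2].
  exists A1, (A2 ++ h :: L1), L2, (size (A1 ++ j :: A2)), (A1 ++ j :: (A2 ++ h :: L1) ++ L2).
  split; [exact: hook_middle_gt | exact: rev_khookword_hook_arm | exact: leg_hook_arm |].
  by left; rewrite -!catA.
have jA1 : j \in A1.
  move: jw; rewrite !mem_cat in_cons (negbTE jNlg) (ltn_eqF jh) !orbF => /orP[//|jA2].
  have := allP (order_path_min leq_trans sA2) j.
  by rewrite mem_rcons in_cons jA2 orbT ltnn => /(_ isT).
have [A1' EA1] := sorted_leq_rcons_mem sA1 jA1; subst A1.
have [L1 [L2 [Elg sL1 sL2]]] := sorted_gtn_cons_split slg jh jNlg; subst lg.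
have sA1' : sorted leq (rcons A1' j).
  by move: sA1; rewrite (sorted_rconsE leq_trans) => /andP[].
exists A1', (A2 ++ h :: L1), L2, (size (A1' ++ A2)), (A1' ++ (A2 ++ h :: L1) ++ j :: L2).
split; [exact: hook_middle_gt | exact: rev_khookword_hook_leg | exact: leg_hook_leg |].
by right; rewrite cat_rcons -!catA.
Qed.

Lemma rev_khookword_eq k w k' w' : rev_khookword k w -> rev_khookword k' w' ->
  perm_eq w w' -> leg k w =i leg k' w' -> w = w'.
Proof.
move=> /rev_khookwordP[arm [h [lg [-> <- sarm slg]]]].
move=> /rev_khookwordP[arm' [h' [lg' [-> <- sarm' slg']]]].
rewrite /leg !drop_size_cat // => pw eq_leg.
have El : h :: lg = h' :: lg' by apply: (irr_sorted_eq gtn_trans (fun x => ltnn x)).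
rewrite -El in pw *; congr (_ ++ _).
have sorted_arm a t : sorted leq (rcons a t) -> sorted leq a.
  by rewrite (sorted_rconsE leq_trans) => /andP[].
apply: (sorted_eq leq_trans anti_leq (sorted_arm _ _ sarm) (sorted_arm _ _ sarm')).
by rewrite -(perm_cat2r (h :: lg)).
Qed.

Lemma CRHW_perm n k w k' w' :
  CRHW n k w -> rev_khookword k' w' -> perm_eq w w' -> CRHW n k' w'.
Proof.
move=> [_ cw <-] hw' pw; split=> //; last exact/esym/perm_size.
by move=> a b c; rewrite -!(perm_mem pw); apply: cw.
Qed.

Lemma content_eq_perm w w' : content_eq w w' <-> perm_eq w w'.
Proof.
split=> [cww' | /permP pww' i]; last by rewrite pww'.
by apply/allP => x _ /=; rewrite cww'.
Qed.

Theorem mainTheorem16 (alpha beta : seq nat) (n j k : nat) (w : seq nat) :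
  composition alpha -> composition beta ->
  ltc alpha beta ->
  nc_border_strip alpha beta ->
  size (skew alpha beta) = n ->
  in_NE alpha beta j ->
  CRHW n k w ->
  act w alpha = Some beta ->
  let newleg := fun i : nat =>
    if j \in leg k w then (i \in leg k w) && (i != j)
    else (i \in leg k w) || (i == j) in
  (exists (w' : seq nat) (k' : nat),
      [/\ rev_khookword k' w', content_eq w w' & leg k' w' =i newleg])
  /\
  (forall (w' : seq nat) (k' : nat),
      rev_khookword k' w' -> content_eq w w' -> leg k' w' =i newleg ->
      CRHW n k' w' /\ act w' alpha = Some beta).
Proof.
move=> _ _ _ _ _ [/in_suppP[r0 box_j] /in_suppP[r1 box_j1] above] hw wab newleg.
have j_gt0 := in_skew_col_gt0 box_j.
have [hkw _ _] := hw.
have [A1 [U [L2 [k' [w' [gtU hkw' leg_w' shape]]]]]] :=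
  rev_khookword_toggle hkw (col_mem_act wab box_j) (col_mem_act wab box_j1).
have pww' : perm_eq w w'.
  by case: shape => -[-> ->]; rewrite perm_cat2l ?perm_cat_cons // perm_sym perm_cat_cons.
have w'ab : act w' alpha = Some beta.
  by case: shape => -[Ew ->]; rewrite Ew in wab; apply/(act_move _ _ j_gt0 gtU above).
split; first by exists w', k'; split=> //; apply/content_eq_perm.
move=> w'' k'' hkw'' /content_eq_perm pww'' leg_w''.
have Ew'' : w'' = w'.
  apply: rev_khookword_eq hkw'' hkw' _ _; first by rewrite -(permPl pww'').
  by move=> i; rewrite leg_w'' leg_w'.
by subst w''; split=> //; apply: CRHW_perm hw hkw'' pww'.
Qed.
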